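(* Let $0<\Gamma_0\le1$ and let $\tau\subset\mathbb R^m$ be a $\Gamma_0$-flake. Then for every vertex $p\in\tau$, $$D(p,\tau)<\frac{2L(\tau)^2\,\Gamma_0}{\ell(\tau)}.$$
   Context: A simplex is a nonempty finite subset $\sigma\subset\mathbb R^m$ (vertices need not be affinely independent); $\dim\sigma=|\sigma|-1$; faces are nonempty subsets. For $p\in\sigma$, $\sigma_p=\sigma\setminus\{p\}$. $L(\sigma)$ and $\ell(\sigma)$ are the largest and smallest distances between distinct vertices (both $0$ for a $0$-simplex). The altitude of $p$ in $\sigma$ is $D(p,\sigma)=d(p,\mathrm{aff}(\sigma_p))$. The thickness of a $j$-simplex is $\Upsilon(\sigma)=1$ if $j=0$ and $\min_{p\in\sigma}D(p,\sigma)/(jL(\sigma))$ otherwise. $\sigma$ is $\Gamma_0$-good if every $j$-dimensional face $\sigma^j\subseteq\sigma$ ($0\le j\le\dim\sigma$) satisfies $\Upsilon(\sigma^j)\ge\Gamma_0^j$; it is $\Gamma_0$-bad otherwise. A $\Gamma_0$-flake is a $\Gamma_0$-bad simplex all of whose proper faces are $\Gamma_0$-good. *)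

From Stdlib Require Import Reals Lra List ClassicalEpsilon.
Import ListNotations.
Open Scope R_scope.

(* A point of R^m is a list of m reals; coordinate k is [nth k v 0]. *)
Definition point := list R.

Definition pt_eq_dec : forall x y : point, {x = y} + {x <> y} :=
  list_eq_dec Req_EM_T.

Definition rsum (n : nat) (f : nat -> R) : R :=
  fold_right Rplus 0 (map f (seq 0 n)).

Definition dist (m : nat) (x y : point) : R :=
  sqrt (rsum m (fun k => (nth k x 0 - nth k y 0) ^ 2)).

Definition Rinf (E : R -> Prop) : R :=
  epsilon (inhabits 0)
    (fun r => (forall x, E x -> r <= x) /\
              (forall b, (forall x, E x -> b <= x) -> b <= r)).

Definition aff (m : nat) (S : list point) (q : point) : Prop :=
  length q = m /\
  exists c : nat -> R, rsum (length S) c = 1 /\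
    forall k, (k < m)%nat ->
      nth k q 0 = rsum (length S) (fun i => c i * nth k (nth i S nil) 0).

Definition dist_set (m : nat) (p : point) (E : point -> Prop) : R :=
  Rinf (fun d => exists q, E q /\ d = dist m p q).

(* A simplex: a nonempty finite set of points of R^m (a duplicate-free list). *)
Definition simplex (m : nat) (s : list point) : Prop :=
  s <> nil /\ NoDup s /\ Forall (fun v => length v = m) s.

Definition face (t s : list point) : Prop :=
  t <> nil /\ NoDup t /\ incl t s.

Definition drop_vertex (p : point) (s : list point) : list point :=
  remove pt_eq_dec p s.

Definition altitude (m : nat) (p : point) (s : list point) : R :=
  dist_set m p (aff m (drop_vertex p s)).

Definition pair_dists (m : nat) (s : list point) : list R :=
  map (fun pq => dist m (fst pq) (snd pq))
      (filter (fun pq => if pt_eq_dec (fst pq) (snd pq) then false else true)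
              (list_prod s s)).

Definition Rmaxl (l : list R) : R :=
  match l with nil => 0 | x :: t => fold_right Rmax x t end.
Definition Rminl (l : list R) : R :=
  match l with nil => 0 | x :: t => fold_right Rmin x t end.

(* L(sigma), l(sigma): largest / smallest distance between distinct vertices
   (both 0 for a 0-simplex) *)
Definition Lmax (m : nat) (s : list point) : R := Rmaxl (pair_dists m s).
Definition lmin (m : nat) (s : list point) : R := Rminl (pair_dists m s).

Definition sdim (s : list point) : nat := (length s - 1)%nat.

Definition thickness (m : nat) (s : list point) : R :=
  if Nat.eqb (sdim s) 0 then 1
  else Rminl (map (fun p => altitude m p s) s) / (INR (sdim s) * Lmax m s).

Definition good (m : nat) (G0 : R) (s : list point) : Prop :=
  forall t, face t s -> thickness m t >= G0 ^ (sdim t).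

Definition bad (m : nat) (G0 : R) (s : list point) : Prop := ~ good m G0 s.

Definition flake (m : nat) (G0 : R) (s : list point) : Prop :=
  bad m G0 s /\
  forall t, face t s -> (length t < length s)%nat -> good m G0 t.

(* Since its proper faces are Γ0-good, the Γ0-bad face is τ itself; vertices and edges
   have thickness 1, so n = dim τ >= 2 and some vertex q has D(q,τ) < n Γ0^n L.
   For any other vertex p we use the exchange inequality
       D(p,τ) D(q,τ_p) <= D(q,τ) D(p,τ_q),
   proved by projecting p and q orthogonally onto the affine hull of τ \ {p,q}: with
   residuals p', q' (so |p'| = D(p,τ_q), |q'| = D(q,τ_p)) and Gram determinant
   G = |p'|^2 |q'|^2 - <p',q'>^2 one has D(p,τ)^2 |q'|^2 <= G <= D(q,τ)^2 |p'|^2.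
   The facet τ_p is good, so D(q,τ_p) >= Γ0^(n-1) (n-1) ℓ, and D(p,τ_q) <= L, whence
   D(p,τ) < n/(n-1) Γ0 L^2/ℓ <= 2 Γ0 L^2/ℓ.  At p = q the bound follows from D <= L when
   Γ0 > 1/2 and from n Γ0^(n-1) <= (2 Γ0)^(n-1) <= 1 otherwise. *)

From Stdlib Require Import Reals List Lra Lia ClassicalEpsilon Classical.
Import ListNotations.
Open Scope R_scope.

Lemma rsum_S n f : rsum (S n) f = rsum n f + f n.
Proof.
  unfold rsum. rewrite seq_S, map_app, fold_right_app. simpl.
  generalize (map f (seq 0 n)). intros l. induction l as [|a l IH]; simpl; lra.
Qed.

Lemma rsum_shift n f : rsum (S n) f = f 0%nat + rsum n (fun i => f (S i)).
Proof.
  induction n as [|n IH].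
  - rewrite rsum_S. unfold rsum; simpl. lra.
  - rewrite rsum_S, IH, (rsum_S n). lra.
Qed.

Lemma rsum_ext n f g : (forall k, (k < n)%nat -> f k = g k) -> rsum n f = rsum n g.
Proof.
  induction n as [|n IH]; intros H; [reflexivity|].
  rewrite !rsum_S, IH by (intros; apply H; lia). rewrite H by lia. reflexivity.
Qed.

Lemma rsum_plus n f g : rsum n (fun k => f k + g k) = rsum n f + rsum n g.
Proof. induction n; [unfold rsum; simpl; lra|rewrite !rsum_S, IHn; lra]. Qed.

Lemma rsum_scal n c f : rsum n (fun k => c * f k) = c * rsum n f.
Proof. induction n; [unfold rsum; simpl; lra|rewrite !rsum_S, IHn; lra]. Qed.

Lemma rsum_minus n f g : rsum n (fun k => f k - g k) = rsum n f - rsum n g.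
Proof.
  rewrite (rsum_ext _ _ (fun k => f k + (-1) * g k)) by (intros; ring).
  rewrite rsum_plus, rsum_scal. ring.
Qed.

Lemma rsum_zero n : rsum n (fun _ => 0) = 0.
Proof. induction n; [reflexivity|rewrite rsum_S, IHn; lra]. Qed.

Lemma rsum_nonneg n f : (forall k, (k < n)%nat -> 0 <= f k) -> 0 <= rsum n f.
Proof.
  induction n as [|n IH]; intros H; [unfold rsum; simpl; lra|].
  rewrite rsum_S. assert (0 <= f n) by (apply H; lia).
  assert (0 <= rsum n f) by (apply IH; intros; apply H; lia). lra.
Qed.

Lemma rsum_zero_each n f : (forall k, (k < n)%nat -> 0 <= f k) -> rsum n f = 0 ->
  forall k, (k < n)%nat -> f k = 0.
Proof.
  induction n as [|n IH]; intros H H0 k Hk; [lia|].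
  rewrite rsum_S in H0.
  assert (0 <= f n) by (apply H; lia).
  assert (0 <= rsum n f) by (apply rsum_nonneg; intros; apply H; lia).
  destruct (Nat.eq_dec k n) as [->|Hkn]; [lra|].
  apply IH; try lia; try lra. intros; apply H; lia.
Qed.

Lemma rsum_indicator n i g : (i < n)%nat ->
  rsum n (fun j => (if Nat.eq_dec j i then 1 else 0) * g j) = g i.
Proof.
  induction n as [|n IH]; intros Hi; [lia|].
  rewrite rsum_S. destruct (Nat.eq_dec n i) as [<-|Hni].
  - rewrite (rsum_ext _ _ (fun _ => 0)), rsum_zero; [lra|].
    intros k Hk. destruct (Nat.eq_dec k n); [lia|lra].
  - rewrite IH by lia. lra.
Qed.

Definition coords (v : point) : nat -> R := fun k => nth k v 0.

Definition ip (m : nat) (u v : nat -> R) : R := rsum m (fun k => u k * v k).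

Lemma ip_ext m u u' v v' : (forall k, (k < m)%nat -> u k = u' k) ->
  (forall k, (k < m)%nat -> v k = v' k) -> ip m u v = ip m u' v'.
Proof. intros H1 H2. unfold ip. apply rsum_ext. intros. rewrite H1, H2 by auto. auto. Qed.

Lemma ip_sym m u v : ip m u v = ip m v u.
Proof. unfold ip. apply rsum_ext; intros; ring. Qed.

Lemma ip_nonneg m u : 0 <= ip m u u.
Proof. unfold ip. apply rsum_nonneg. intros. nra. Qed.

Lemma ip_zero_r m u d : (forall k, (k < m)%nat -> d k = 0) -> ip m u d = 0.
Proof.
  intros H. unfold ip.
  rewrite (rsum_ext _ _ (fun _ => 0)) by (intros k Hk; rewrite H by auto; ring).
  apply rsum_zero.
Qed.

Lemma ip_self_zero m d : ip m d d = 0 -> forall k, (k < m)%nat -> d k = 0.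
Proof.
  intros H k Hk.
  assert (d k * d k = 0) by (apply (rsum_zero_each m (fun k => d k * d k)); auto; intros; nra).
  nra.
Qed.

Lemma ip_sub_r m u v w : ip m u (fun k => v k - w k) = ip m u v - ip m u w.
Proof. unfold ip. rewrite <- rsum_minus. apply rsum_ext; intros; ring. Qed.

Lemma ip_lin_r m u w a e : ip m u (fun k => w k + a * e k) = ip m u w + a * ip m u e.
Proof.
  unfold ip. rewrite (rsum_ext _ _ (fun k => u k * w k + a * (u k * e k))) by (intros; ring).
  rewrite rsum_plus, rsum_scal. ring.
Qed.

Lemma ip_expand m u d w e a b :
  ip m (fun k => u k + a * d k) (fun k => w k + b * e k) =
  ip m u w + b * ip m u e + a * ip m d w + a * b * ip m d e.
Proof.
  unfold ip.
  rewrite (rsum_ext _ _ (fun k => (u k * w k + b * (u k * e k)) +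
                                  (a * (d k * w k) + (a * b) * (d k * e k))))
    by (intros; ring).
  rewrite !rsum_plus, !rsum_scal. ring.
Qed.

Lemma dist_ip m x y : dist m x y =
  sqrt (ip m (fun k => coords x k - coords y k) (fun k => coords x k - coords y k)).
Proof. unfold dist, ip, coords. f_equal. apply rsum_ext. intros; ring. Qed.

Lemma dist_sq m x y : dist m x y ^ 2 =
  ip m (fun k => coords x k - coords y k) (fun k => coords x k - coords y k).
Proof. rewrite dist_ip. apply pow2_sqrt, ip_nonneg. Qed.

Definition mk (m : nat) (f : nat -> R) : point := map f (seq 0 m).

Lemma coords_mk m f k : (k < m)%nat -> coords (mk m f) k = f k.
Proof.
  intros Hk. unfold coords, mk. rewrite nth_indep with (d' := f 0%nat).
  - rewrite map_nth, seq_nth by auto. reflexivity.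
  - rewrite length_map, length_seq. auto.
Qed.

Lemma dist_mk m p f : dist m p (mk m f) =
  sqrt (ip m (fun k => coords p k - f k) (fun k => coords p k - f k)).
Proof. rewrite dist_ip. f_equal. apply ip_ext; intros; rewrite coords_mk; auto. Qed.

Lemma dist_nonneg m x y : 0 <= dist m x y.
Proof. apply sqrt_pos. Qed.

Lemma dist_sym m x y : dist m x y = dist m y x.
Proof. unfold dist. f_equal. apply rsum_ext. intros; ring. Qed.

Lemma dist_pos m x y : x <> y -> length x = m -> length y = m -> 0 < dist m x y.
Proof.
  intros Hxy Hx Hy. destruct (Rlt_dec 0 (dist m x y)) as [H|H]; auto.
  exfalso. apply Hxy.
  assert (H0 : ip m (fun k => coords x k - coords y k) (fun k => coords x k - coords y k) = 0).
  { rewrite <- dist_sq. pose proof (dist_nonneg m x y).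
    replace (dist m x y) with 0 by lra. ring. }
  apply (nth_ext x y 0 0); [congruence|].
  intros k Hk. pose proof (ip_self_zero _ _ H0 k ltac:(lia)) as Hk'.
  unfold coords in Hk'. lra.
Qed.

Definition hull (m : nat) (S : list point) (f : nat -> R) : Prop :=
  exists c : nat -> R, rsum (length S) c = 1 /\
    forall k, (k < m)%nat -> f k = rsum (length S) (fun i => c i * nth k (nth i S nil) 0).

Lemma aff_hull m S q : aff m S q <-> (length q = m /\ hull m S (coords q)).
Proof. unfold aff, hull, coords. tauto. Qed.

Lemma aff_mk m S f : hull m S f -> aff m S (mk m f).
Proof.
  intros [c [Hc1 Hc2]]. apply aff_hull. split.
  - unfold mk. rewrite length_map, length_seq. auto.
  - exists c. split; auto. intros k Hk. rewrite coords_mk; auto.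
Qed.

Lemma hull_ext m S f g : hull m S f -> (forall k, (k < m)%nat -> f k = g k) -> hull m S g.
Proof.
  intros [c [H1 H2]] H. exists c. split; auto. intros k Hk. rewrite <- H by auto. auto.
Qed.

Lemma hull_comb m S x y z t : hull m S x -> hull m S y -> hull m S z ->
  hull m S (fun k => x k + t * (y k - z k)).
Proof.
  intros [cx [Hx1 Hx2]] [cy [Hy1 Hy2]] [cz [Hz1 Hz2]].
  exists (fun i => cx i + t * (cy i - cz i)). split.
  - rewrite rsum_plus, rsum_scal, rsum_minus, Hx1, Hy1, Hz1. ring.
  - intros k Hk. rewrite Hx2, Hy2, Hz2 by auto.
    rewrite <- rsum_minus, <- rsum_scal, <- rsum_plus.
    apply rsum_ext. intros. ring.
Qed.

Lemma hull_vertex m S v : In v S -> hull m S (coords v).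
Proof.
  intros Hv. destruct (In_nth S v nil Hv) as [i [Hi Hiv]].
  exists (fun j => if Nat.eq_dec j i then 1 else 0). split.
  - rewrite (rsum_ext _ _ (fun j => (if Nat.eq_dec j i then 1 else 0) * 1)) by (intros; ring).
    apply rsum_indicator; auto.
  - intros k Hk. rewrite (rsum_indicator (length S) i (fun j => nth k (nth j S nil) 0)) by auto.
    rewrite Hiv. reflexivity.
Qed.

Lemma hull_ind m S (E : (nat -> R) -> Prop) :
  (forall f g, E f -> (forall k, (k < m)%nat -> f k = g k) -> E g) ->
  (forall x y z t, E x -> E y -> E z -> E (fun k => x k + t * (y k - z k))) ->
  (forall v, In v S -> E (coords v)) ->
  forall f, hull m S f -> E f.
Proof.
  intros Hext Hcomb Hv f [c [Hc1 Hc2]].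
  destruct S as [|v0 S']; [unfold rsum in Hc1; simpl in Hc1; lra|].
  set (S := v0 :: S') in *.
  assert (Hpartial : forall j, (j <= length S)%nat ->
    E (fun k => coords v0 k + rsum j (fun i => c i * (nth k (nth i S nil) 0 - coords v0 k)))).
  { induction j as [|j IH]; intros Hj.
    - apply (Hext (coords v0)); [apply Hv; simpl; auto|].
      intros. unfold rsum; simpl. ring.
    - assert (Hjn : In (nth j S nil) S) by (apply nth_In; lia).
      apply (Hext _ _ (Hcomb _ _ _ (c j) (IH ltac:(lia)) (Hv _ Hjn) (Hv v0 (or_introl eq_refl)))).
      intros k Hk. rewrite rsum_S. unfold coords. ring. }
  apply (Hext _ _ (Hpartial (length S) (le_n _))).
  intros k Hk. rewrite Hc2 by auto.
  rewrite (rsum_ext _ _ (fun i => c i * nth k (nth i S nil) 0 - coords v0 k * c i))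
    by (intros; ring).
  rewrite rsum_minus, rsum_scal, Hc1. ring.
Qed.

Lemma hull_incl m T S : incl T S -> forall f, hull m T f -> hull m S f.
Proof.
  intros Hi. apply hull_ind.
  - intros f g Hf Hfg. eapply hull_ext; eauto.
  - intros. apply hull_comb; auto.
  - intros v Hv. apply hull_vertex. auto.
Qed.

Lemma hull_singleton m w f : hull m [w] f -> forall k, (k < m)%nat -> f k = coords w k.
Proof.
  intros [c [Hc1 Hc2]] k Hk. rewrite Hc2 by auto.
  simpl length in *. rewrite rsum_shift in Hc1 |- *. unfold rsum in Hc1 |- *. simpl in *.
  unfold coords. replace (c 0%nat) with 1 by lra. ring.
Qed.

Lemma hull_cons_decomp m T S w yw : hull m T yw -> incl S (w :: T) ->
  forall f, hull m S f -> exists b s, hull m T b /\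
    forall k, (k < m)%nat -> f k = b k + s * (coords w k - yw k).
Proof.
  intros Hyw HS. apply hull_ind.
  - intros f g [b [s [Hb Hf]]] Hfg. exists b, s. split; auto.
    intros k Hk. rewrite <- Hfg, Hf by auto. auto.
  - intros x y z t [b1 [s1 [Hb1 H1]]] [b2 [s2 [Hb2 H2]]] [b3 [s3 [Hb3 H3]]].
    exists (fun k => b1 k + t * (b2 k - b3 k)), (s1 + t * (s2 - s3)).
    split; [apply hull_comb; auto|].
    intros k Hk. rewrite H1, H2, H3 by auto. ring.
  - intros v Hv. destruct (HS v Hv) as [<-|HvT].
    + exists yw, 1. split; auto. intros; ring.
    + exists (coords v), 0. split; [apply hull_vertex; auto|]. intros; ring.
Qed.

Lemma orth_diff m T r y :
  (forall a, hull m T a -> ip m r (fun k => a k - y k) = 0) ->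
  forall a a', hull m T a -> hull m T a' -> ip m r (fun k => a k - a' k) = 0.
Proof.
  intros Horth a a' Ha Ha'.
  rewrite (ip_ext m r r _ (fun k => (a k - y k) - (a' k - y k))) by (intros; ring).
  rewrite ip_sub_r, Horth, Horth by auto. ring.
Qed.

Lemma hull_proj m S : S <> nil -> forall z, exists y, hull m S y /\
  forall a, hull m S a -> ip m (fun k => z k - y k) (fun k => a k - y k) = 0.
Proof.
  induction S as [|w S' IH]; intros Hne z; [congruence|].
  destruct S' as [|v S''].
  { exists (coords w). split; [apply hull_vertex; simpl; auto|].
    intros a Ha. apply ip_zero_r. intros k Hk. rewrite (hull_singleton _ _ _ Ha) by auto. ring. }
  set (S' := v :: S'') in *.
  assert (HS' : incl S' (w :: S')) by (intros x Hx; simpl; auto).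
  destruct (IH ltac:(discriminate) (coords w)) as [yw [Hyw Horthw]].
  destruct (IH ltac:(discriminate) z) as [yz [Hyz Horthz]].
  set (d := fun k => coords w k - yw k).
  set (u := fun k => z k - yz k).
  set (s := ip m u d / ip m d d).
  assert (Hs : ip m u d - s * ip m d d = 0).
  { destruct (Req_EM_T (ip m d d) 0) as [H0|H0].
    - rewrite H0, ip_zero_r by (apply ip_self_zero; auto). ring.
    - unfold s. field. auto. }
  exists (fun k => yz k + s * (coords w k - yw k)). split.
  { apply hull_comb; [| apply hull_vertex; simpl; auto |]; apply (hull_incl m S'); auto. }
  intros a Ha.
  destruct (hull_cons_decomp m S' _ w yw Hyw (incl_refl _) a Ha) as [b [c [Hb Ha']]].
  rewrite (ip_ext m _ (fun k => u k + (- s) * d k) _ (fun k => (b k - yz k) + (c - s) * d k))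
    by (intros k Hk; unfold u, d; try rewrite Ha' by auto; ring).
  rewrite ip_expand.
  assert (H1 : ip m u (fun k => b k - yz k) = 0) by (apply Horthz; auto).
  assert (H2 : ip m d (fun k => b k - yz k) = 0) by (apply (orth_diff m S' d yw); auto).
  rewrite H1, H2. replace (ip m u d) with (s * ip m d d) by lra. ring.
Qed.

Lemma Rinf_spec (E : R -> Prop) : (exists x, E x) -> (forall x, E x -> 0 <= x) ->
  (forall x, E x -> Rinf E <= x) /\ (forall b, (forall x, E x -> b <= x) -> b <= Rinf E).
Proof.
  intros [x0 Hx0] Hlb. unfold Rinf. apply epsilon_spec.
  destruct (completeness (fun y => E (- y))) as [M [HM1 HM2]].
  - exists 0. intros y Hy. apply Hlb in Hy. lra.
  - exists (- x0). rewrite Ropp_involutive. auto.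
  - exists (- M). split.
    + intros x Hx. assert (- x <= M) by (apply HM1; rewrite Ropp_involutive; auto). lra.
    + intros b Hb. assert (M <= - b) by (apply HM2; intros y Hy; apply Hb in Hy; lra). lra.
Qed.

Lemma dset_le m p (E : point -> Prop) x : E x -> dist_set m p E <= dist m p x.
Proof.
  intros Hx. unfold dist_set.
  destruct (Rinf_spec (fun d => exists q, E q /\ d = dist m p q)) as [H1 _].
  - exists (dist m p x). eauto.
  - intros d [q [_ ->]]. apply dist_nonneg.
  - apply H1. eauto.
Qed.

Lemma dset_ge m p (E : point -> Prop) b : (exists x, E x) ->
  (forall x, E x -> b <= dist m p x) -> b <= dist_set m p E.
Proof.
  intros [x Hx] Hb. unfold dist_set.
  destruct (Rinf_spec (fun d => exists q, E q /\ d = dist m p q)) as [_ H2].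
  - exists (dist m p x). eauto.
  - intros d [q [_ ->]]. apply dist_nonneg.
  - apply H2. intros d [q [Hq ->]]. auto.
Qed.

Lemma dset_nonneg m p (E : point -> Prop) : (exists x, E x) -> 0 <= dist_set m p E.
Proof. intros H. apply dset_ge; auto. intros; apply dist_nonneg. Qed.

Lemma dset_mono m p (E E' : point -> Prop) : (exists x, E' x) -> (forall x, E' x -> E x) ->
  dist_set m p E <= dist_set m p E'.
Proof. intros Hne Hs. apply dset_ge; auto. intros x Hx. apply dset_le. auto. Qed.

Lemma dset_sq_upper m p (E : point -> Prop) x : E x -> dist_set m p E ^ 2 <= dist m p x ^ 2.
Proof.
  intros Hx. apply pow_incr. split; [apply dset_nonneg; eauto | apply dset_le; auto].
Qed.

Lemma dset_sq_lower m p (E : point -> Prop) a b : (exists x, E x) -> 0 <= a ->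
  (forall x, E x -> b <= dist m p x ^ 2 * a) -> b <= dist_set m p E ^ 2 * a.
Proof.
  intros [x0 Hx0] Ha Hb.
  assert (HD : 0 <= dist_set m p E ^ 2 * a) by (apply Rmult_le_pos; [apply pow2_ge_0|auto]).
  destruct (Rle_lt_dec b 0) as [Hb0|Hb0]; [lra|].
  destruct (Req_dec a 0) as [Ha0|Ha0].
  { specialize (Hb x0 Hx0). rewrite Ha0, Rmult_0_r in Hb. lra. }
  assert (Hq : sqrt (b / a) <= dist_set m p E).
  { apply dset_ge; eauto. intros x Hx.
    rewrite <- (sqrt_pow2 (dist m p x)) by apply dist_nonneg. apply sqrt_le_1_alt.
    apply (Rmult_le_reg_r a); [lra|]. unfold Rdiv. rewrite Rmult_assoc, Rinv_l, Rmult_1_r by lra.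
    auto. }
  assert (Hq2 : sqrt (b / a) ^ 2 <= dist_set m p E ^ 2)
    by (apply pow_incr; split; [apply sqrt_pos|lra]).
  rewrite pow2_sqrt in Hq2 by (apply Rlt_le, Rdiv_lt_0_compat; lra).
  apply (Rmult_le_compat_r a) in Hq2; [|lra].
  unfold Rdiv in Hq2. rewrite Rmult_assoc, Rinv_l, Rmult_1_r in Hq2 by lra. auto.
Qed.

(* The distance to an affine hull is the length of the residual of the orthogonal
   projection (Pythagoras). *)
Lemma dist_to_hull m T z y : hull m T y ->
  (forall a, hull m T a -> ip m (fun k => coords z k - y k) (fun k => a k - y k) = 0) ->
  dist_set m z (aff m T) = sqrt (ip m (fun k => coords z k - y k) (fun k => coords z k - y k)).
Proof.
  intros Hy Horth. apply Rle_antisym.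
  - rewrite <- dist_mk. apply dset_le, aff_mk; auto.
  - set (r := fun k => coords z k - y k) in *.
    apply dset_ge; [exists (mk m y); apply aff_mk; auto|].
    intros x Hx. apply aff_hull in Hx. destruct Hx as [_ Hx].
    rewrite dist_ip. apply sqrt_le_1_alt.
    rewrite (ip_ext m (fun k => coords z k - coords x k) (fun k => r k + 1 * (y k - coords x k))
                      (fun k => coords z k - coords x k) (fun k => r k + 1 * (y k - coords x k)))
      by (intros; unfold r; ring).
    rewrite ip_expand, (ip_sym m (fun k => y k - coords x k) r).
    rewrite (orth_diff m T r y Horth) by auto.
    pose proof (ip_nonneg m (fun k => y k - coords x k)). lra.
Qed.

(* Upper bound: the point [yp + t (q - yq)] with [t = <p',q'>/|q'|^2] lies in the hull. *)
Lemma gram_upper m S p q yp yq : hull m S yp -> hull m S yq -> In q S ->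
  let p' := fun k => coords p k - yp k in
  let q' := fun k => coords q k - yq k in
  dist_set m p (aff m S) ^ 2 * ip m q' q' <= ip m p' p' * ip m q' q' - ip m p' q' ^ 2.
Proof.
  intros Hyp Hyq Hq p' q'.
  set (Np := ip m p' p'). set (Nq := ip m q' q'). set (C := ip m p' q').
  destruct (Req_dec Nq 0) as [Hq0|Hq0].
  { assert (HC : C = 0) by (apply ip_zero_r, ip_self_zero; auto).
    rewrite Hq0, HC. lra. }
  set (t := C / Nq).
  assert (Hx : hull m S (fun k => yp k + t * (coords q k - yq k)))
    by (apply hull_comb; auto; apply hull_vertex; auto).
  assert (Hdist : dist m p (mk m (fun k => yp k + t * (coords q k - yq k))) ^ 2 =
                  Np - 2 * t * C + t * t * Nq).
  { rewrite dist_mk, pow2_sqrt by apply ip_nonneg.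
    rewrite (ip_ext m _ (fun k => p' k + (- t) * q' k) _ (fun k => p' k + (- t) * q' k))
      by (intros; unfold p', q'; ring).
    rewrite ip_expand, (ip_sym m q' p'). fold Np Nq C. ring. }
  pose proof (dset_sq_upper m p _ _ (aff_mk _ _ _ Hx)) as Hle. rewrite Hdist in Hle.
  pose proof (ip_nonneg m q').
  apply (Rmult_le_compat_r Nq) in Hle; [|auto].
  replace ((Np - 2 * t * C + t * t * Nq) * Nq) with (Np * Nq - C ^ 2) in Hle
    by (unfold t; field; auto).
  auto.
Qed.

(* Lower bound: if [yp], [yq] are the orthogonal projections onto the hull of [T], every
   point of the hull of [S], contained in that of [p :: T], is [b + s p'] with [b] in the
   hull of [T], and its distance to [q] is at least that of [yq + s p']. *)
Lemma gram_lower m T S p q yp yq : hull m T yp -> hull m T yq ->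
  let p' := fun k => coords p k - yp k in
  let q' := fun k => coords q k - yq k in
  (forall a, hull m T a -> ip m p' (fun k => a k - yp k) = 0) ->
  (forall a, hull m T a -> ip m q' (fun k => a k - yq k) = 0) ->
  incl S (p :: T) -> In p S ->
  ip m p' p' * ip m q' q' - ip m p' q' ^ 2 <= dist_set m q (aff m S) ^ 2 * ip m p' p'.
Proof.
  intros Hyp Hyq p' q' Horthp Horthq HS Hp.
  set (Np := ip m p' p'). set (Nq := ip m q' q'). set (C := ip m p' q').
  apply dset_sq_lower; [exists (mk m (coords p)); apply aff_mk, hull_vertex; auto|apply ip_nonneg|].
  intros x Hx. apply aff_hull in Hx. destruct Hx as [_ Hx].
  destruct (hull_cons_decomp m T S p yp Hyp HS _ Hx) as [b [s [Hb Hxb]]].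
  set (w := fun k => q' k + (- s) * p' k).
  set (v := fun k => yq k - b k).
  assert (Hd : dist m q x ^ 2 = ip m (fun k => w k + 1 * v k) (fun k => w k + 1 * v k)).
  { rewrite dist_sq. apply ip_ext; intros k Hk; pose proof (Hxb k Hk) as Hxk;
      unfold w, v, q', p', coords in *; rewrite Hxk; ring. }
  assert (Hwv : ip m w v = 0).
  { unfold w. rewrite (ip_sym m _ v), ip_lin_r, !(ip_sym m v). unfold v.
    rewrite (orth_diff m T q' yq), (orth_diff m T p' yp) by auto. ring. }
  assert (Hww : ip m w w = Nq - 2 * s * C + s * s * Np).
  { unfold w. rewrite ip_expand, (ip_sym m q' p'). fold Np Nq C. ring. }
  rewrite Hd, ip_expand, (ip_sym m v w), Hwv, Hww.
  pose proof (ip_nonneg m v). pose proof (ip_nonneg m p').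
  pose proof (pow2_ge_0 (s * Np - C)).
  assert (0 <= ip m v v * Np) by (apply Rmult_le_pos; auto).
  nra.
Qed.

Lemma hull_exchange m T Sp Sq p q : T <> nil ->
  incl T Sp -> In q Sp -> incl Sq (p :: T) -> In p Sq ->
  dist_set m p (aff m Sp) * dist_set m q (aff m T) <=
  dist_set m q (aff m Sq) * dist_set m p (aff m T).
Proof.
  intros HT HTp Hq HSq Hp.
  destruct (hull_proj m T HT (coords p)) as [yp [Hyp Horthp]].
  destruct (hull_proj m T HT (coords q)) as [yq [Hyq Horthq]].
  rewrite (dist_to_hull m T p yp), (dist_to_hull m T q yq) by auto.
  pose proof (gram_upper m Sp p q yp yq (hull_incl _ _ _ HTp _ Hyp) (hull_incl _ _ _ HTp _ Hyq) Hq)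
    as Hup.
  pose proof (gram_lower m T Sq p q yp yq Hyp Hyq Horthp Horthq HSq Hp) as Hlow.
  cbv zeta in Hup, Hlow.
  set (p' := fun k => coords p k - yp k) in *. set (q' := fun k => coords q k - yq k) in *.
  set (Np := ip m p' p') in *. set (Nq := ip m q' q') in *.
  set (Dp := dist_set m p (aff m Sp)) in *. set (Dq := dist_set m q (aff m Sq)) in *.
  assert (HDq : 0 <= Dq)
    by (apply dset_nonneg; exists (mk m (coords p)); apply aff_mk, hull_vertex; auto).
  assert (HNp : 0 <= Np) by apply ip_nonneg. assert (HNq : 0 <= Nq) by apply ip_nonneg.
  apply Rsqr_incr_0_var; [|apply Rmult_le_pos; [auto|apply sqrt_pos]].
  unfold Rsqr. rewrite <- (sqrt_sqrt Np HNp), <- (sqrt_sqrt Nq HNq) in Hup, Hlow.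
  nra.
Qed.

Lemma NoDup_rem (l : list point) x : NoDup l -> NoDup (remove pt_eq_dec x l).
Proof.
  induction l as [|a l IH]; intros H; simpl; [constructor|].
  inversion H; subst. destruct (pt_eq_dec x a).
  - apply IH; auto.
  - constructor; auto. intro Hin. apply in_remove in Hin. tauto.
Qed.

Lemma length_rem (l : list point) x : NoDup l -> In x l ->
  length (remove pt_eq_dec x l) = pred (length l).
Proof.
  induction l as [|a l IH]; intros H Hx; [destruct Hx|].
  inversion H; subst. simpl. destruct (pt_eq_dec x a) as [<-|Hxa].
  - rewrite notin_remove; auto.
  - destruct Hx as [Hx|Hx]; [congruence|]. simpl. rewrite IH; auto.
    destruct l; [destruct Hx|]. auto.
Qed.

Lemma other_vertex (s : list point) x : NoDup s -> (2 <= length s)%nat -> In x s ->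
  exists y, In y s /\ y <> x.
Proof.
  intros Hnd Hl Hx. pose proof (length_rem s x Hnd Hx) as Hlen.
  destruct (remove pt_eq_dec x s) as [|y r] eqn:E; simpl in Hlen; [lia|].
  exists y. assert (Hy : In y (remove pt_eq_dec x s)) by (rewrite E; simpl; auto).
  apply in_remove in Hy. tauto.
Qed.

Lemma third_vertex (s : list point) x y : NoDup s -> (3 <= length s)%nat ->
  In x s -> In y s -> x <> y -> exists z, In z s /\ z <> x /\ z <> y.
Proof.
  intros Hnd Hl Hx Hy Hxy.
  destruct (other_vertex (remove pt_eq_dec y s) x) as [z [Hz Hzx]].
  - apply NoDup_rem; auto.
  - rewrite length_rem; auto. lia.
  - apply in_in_remove; auto.
  - apply in_remove in Hz. exists z. tauto.
Qed.

Lemma Rmaxl_ge l x : In x l -> x <= Rmaxl l.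
Proof.
  destruct l as [|a t]; [intros []|]. simpl.
  induction t as [|b t IH]; simpl; intros H.
  - destruct H as [->|[]]. lra.
  - pose proof (Rmax_l b (fold_right Rmax a t)). pose proof (Rmax_r b (fold_right Rmax a t)).
    destruct H as [->|[->|H]]; [|lra|]; eapply Rle_trans; try apply IH; simpl; auto.
Qed.

Lemma Rmaxl_in l : l <> nil -> In (Rmaxl l) l.
Proof.
  destruct l as [|a t]; [congruence|]. intros _. simpl.
  induction t as [|b t IH]; simpl; auto.
  destruct (Rle_dec b (fold_right Rmax a t)).
  - rewrite Rmax_right by auto. simpl in IH. tauto.
  - rewrite Rmax_left by lra. auto.
Qed.

Lemma Rminl_le l x : In x l -> Rminl l <= x.
Proof.
  destruct l as [|a t]; [intros []|]. simpl.
  induction t as [|b t IH]; simpl; intros H.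
  - destruct H as [->|[]]. lra.
  - pose proof (Rmin_l b (fold_right Rmin a t)). pose proof (Rmin_r b (fold_right Rmin a t)).
    destruct H as [->|[->|H]]; [|lra|]; eapply Rle_trans; try apply IH; simpl; auto.
Qed.

Lemma Rminl_in l : l <> nil -> In (Rminl l) l.
Proof.
  destruct l as [|a t]; [congruence|]. intros _. simpl.
  induction t as [|b t IH]; simpl; auto.
  destruct (Rle_dec b (fold_right Rmin a t)).
  - rewrite Rmin_left by auto. auto.
  - rewrite Rmin_right by lra. simpl in IH. tauto.
Qed.

Lemma Rmaxl_same l l' : (forall x, In x l <-> In x l') -> Rmaxl l = Rmaxl l'.
Proof.
  intros H. destruct l as [|a t].
  - destruct l' as [|b t']; [reflexivity|]. exfalso. apply (H b). simpl; auto.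
  - assert (Hl' : l' <> nil) by (intros ->; apply (H a); simpl; auto).
    apply Rle_antisym; apply Rmaxl_ge; [apply H|apply H]; apply Rmaxl_in; auto; discriminate.
Qed.

Lemma Rminl_same l l' : (forall x, In x l <-> In x l') -> Rminl l = Rminl l'.
Proof.
  intros H. destruct l as [|a t].
  - destruct l' as [|b t']; [reflexivity|]. exfalso. apply (H b). simpl; auto.
  - assert (Hl' : l' <> nil) by (intros ->; apply (H a); simpl; auto).
    apply Rle_antisym; apply Rminl_le; [apply H|apply H]; apply Rminl_in; auto; discriminate.
Qed.

Lemma pair_dists_in m s d : In d (pair_dists m s) <->
  exists x y, In x s /\ In y s /\ x <> y /\ d = dist m x y.
Proof.
  unfold pair_dists. rewrite in_map_iff. split.
  - intros [[x y] [Hd Hin]]. apply filter_In in Hin. destruct Hin as [Hin Hf].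
    apply in_prod_iff in Hin. simpl in *. destruct (pt_eq_dec x y); [discriminate|].
    exists x, y. destruct Hin. repeat split; auto.
  - intros [x [y [Hx [Hy [Hxy Hd]]]]]. exists (x, y). simpl. split; auto.
    apply filter_In. split; [apply in_prod_iff; auto|]. simpl.
    destruct (pt_eq_dec x y); congruence.
Qed.

Lemma Lmax_ge m s x y : In x s -> In y s -> x <> y -> dist m x y <= Lmax m s.
Proof. intros. apply Rmaxl_ge, pair_dists_in. eauto 7. Qed.

Lemma lmin_le m s x y : In x s -> In y s -> x <> y -> lmin m s <= dist m x y.
Proof. intros. apply Rminl_le, pair_dists_in. eauto 7. Qed.

Lemma lmin_pos m s x y : Forall (fun v => length v = m) s ->
  In x s -> In y s -> x <> y -> 0 < lmin m s.
Proof.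
  intros Hlen Hx Hy Hxy. rewrite Forall_forall in Hlen.
  assert (Hne : pair_dists m s <> nil).
  { intros E. assert (Hin : In (dist m x y) (pair_dists m s)) by (apply pair_dists_in; eauto 7).
    rewrite E in Hin. destruct Hin. }
  unfold lmin.
  destruct (proj1 (pair_dists_in m s _) (Rminl_in _ Hne)) as [a [b [Ha [Hb [Hab ->]]]]].
  apply dist_pos; auto.
Qed.

Lemma Lmax_same m s s' : (forall x, In x s <-> In x s') -> Lmax m s = Lmax m s'.
Proof.
  intros H. apply Rmaxl_same. intros d. rewrite !pair_dists_in.
  split; intros [x [y Hxy]]; exists x, y; rewrite (H x), (H y) in *; tauto.
Qed.

Lemma altitude_bounds m p s v : In v s -> v <> p -> length v = m ->
  0 <= altitude m p s <= dist m p v.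
Proof.
  intros Hv Hvp Hlv.
  assert (Haff : aff m (drop_vertex p s) v)
    by (apply aff_hull; split; auto; apply hull_vertex, in_in_remove; auto).
  split; [apply dset_nonneg; eauto | apply dset_le; auto].
Qed.

Lemma altitude_same m p s s' v : (forall x, In x s <-> In x s') ->
  In v s -> v <> p -> length v = m -> altitude m p s = altitude m p s'.
Proof.
  intros H Hv Hvp Hlv.
  assert (Hsub : forall t t', incl t t' -> forall x,
            aff m (drop_vertex p t) x -> aff m (drop_vertex p t') x).
  { intros t t' Htt' x Hx. apply aff_hull in Hx. destruct Hx as [Hlx Hhx].
    apply aff_hull. split; auto.
    exact (hull_incl _ _ _ (remove_incl _ _ Htt') _ Hhx). }
  assert (Hne : forall t, In v t -> exists x, aff m (drop_vertex p t) x)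
    by (intros t Ht; exists v; apply aff_hull; split; auto; apply hull_vertex, in_in_remove; auto).
  assert (Hv' : In v s') by (apply H; auto).
  unfold altitude. apply Rle_antisym; apply dset_mono; auto; apply Hsub; auto;
    intros x Hx; apply H; auto.
Qed.

Lemma dist_set_singleton m x y : length y = m -> dist_set m x (aff m [y]) = dist m x y.
Proof.
  intros Hy. apply Rle_antisym.
  - apply dset_le. apply aff_hull. split; auto. apply hull_vertex. simpl; auto.
  - apply dset_ge; [exists y; apply aff_hull; split; auto; apply hull_vertex; simpl; auto|].
    intros z Hz. apply aff_hull in Hz. destruct Hz as [Hlz Hz].
    replace z with y; [lra|].
    apply (nth_ext y z 0 0); [congruence|]. intros k Hk.
    symmetry. apply (hull_singleton m y (coords z)); auto. lia.
Qed.

Lemma thickness_same m (s s' : list point) : NoDup s -> Forall (fun v => length v = m) s ->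
  length s = length s' -> (forall x, In x s <-> In x s') -> thickness m s = thickness m s'.
Proof.
  intros Hnd Hlen Hl Hss'. rewrite Forall_forall in Hlen.
  assert (Hdim : sdim s' = sdim s) by (unfold sdim; lia).
  unfold thickness. rewrite Hdim.
  destruct (Nat.eqb_spec (sdim s) 0) as [_|Hn]; [reflexivity|]. unfold sdim in Hn.
  rewrite (Lmax_same m s s' Hss').
  rewrite (Rminl_same (map (fun p => altitude m p s) s) (map (fun p => altitude m p s') s'));
    [reflexivity|].
  intros a. rewrite !in_map_iff.
  split; intros [p [Hpa Hp]]; exists p; split; try (apply Hss'; auto); rewrite <- Hpa.
  - destruct (other_vertex s p Hnd ltac:(lia) Hp) as [v [Hv Hvp]].
    symmetry. apply (altitude_same m p s s' v); auto.
  - apply Hss' in Hp. destruct (other_vertex s p Hnd ltac:(lia) Hp) as [v [Hv Hvp]].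
    apply (altitude_same m p s s' v); auto.
Qed.

Lemma thickness_edge m x y : x <> y -> length x = m -> length y = m -> thickness m [x; y] = 1.
Proof.
  intros Hxy Hx Hy.
  assert (HL : Lmax m [x; y] = dist m x y).
  { apply Rle_antisym; [|apply Lmax_ge; simpl; auto].
    assert (Hne : pair_dists m [x; y] <> nil).
    { intros E. assert (Hin : In (dist m x y) (pair_dists m [x; y]))
        by (apply pair_dists_in; exists x, y; simpl; auto).
      rewrite E in Hin. destruct Hin. }
    destruct (proj1 (pair_dists_in _ _ _) (Rmaxl_in _ Hne)) as [a [b [Ha [Hb [Hab E]]]]].
    unfold Lmax. rewrite E. simpl in Ha, Hb.
    destruct Ha as [<-|[<-|[]]]; destruct Hb as [<-|[<-|[]]]; try congruence; try lra.
    rewrite dist_sym. lra. }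
  assert (Hax : altitude m x [x; y] = dist m x y).
  { unfold altitude, drop_vertex. simpl.
    destruct (pt_eq_dec x x); [|congruence]. destruct (pt_eq_dec x y); [congruence|].
    apply dist_set_singleton; auto. }
  assert (Hay : altitude m y [x; y] = dist m x y).
  { unfold altitude, drop_vertex. simpl.
    destruct (pt_eq_dec y x); [congruence|]. destruct (pt_eq_dec y y); [|congruence].
    rewrite dist_sym. apply dist_set_singleton; auto. }
  pose proof (dist_pos m x y Hxy Hx Hy).
  unfold thickness. simpl. rewrite HL, Hax, Hay, Rmin_left by lra. field. lra.
Qed.

(* The bad face of a flake is the flake itself. *)
Lemma flake_thin m G0 tau : simplex m tau -> flake m G0 tau ->
  thickness m tau < G0 ^ sdim tau.
Proof.
  intros [_ [Hnd Hlen]] [Hbad Hgood].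
  apply not_all_ex_not in Hbad. destruct Hbad as [t Ht].
  apply imply_to_and in Ht. destruct Ht as [[Htne [Htnd Hinc]] Hthin].
  apply Rnot_ge_lt in Hthin.
  pose proof (NoDup_incl_length Htnd Hinc) as Hle.
  destruct (Nat.eq_dec (length t) (length tau)) as [Heq|Hlt].
  - assert (Hinc' : incl tau t) by (apply NoDup_length_incl; auto; lia).
    unfold sdim in *. rewrite Heq in Hthin.
    rewrite (thickness_same m tau t); auto. intros x; split; auto.
  - exfalso. specialize (Hgood t (conj Htne (conj Htnd Hinc)) ltac:(lia)).
    specialize (Hgood t (conj Htne (conj Htnd (incl_refl t)))). lra.
Qed.

(* Vertices and edges are never thin, so a flake has at least three vertices. *)
Lemma flake_three_vertices m G0 tau : 0 < G0 <= 1 -> simplex m tau -> flake m G0 tau ->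
  (3 <= length tau)%nat.
Proof.
  intros HG0 Hs Hf. pose proof (flake_thin m G0 tau Hs Hf) as Hthin.
  destruct Hs as [Hne [Hnd Hlen]].
  destruct tau as [|x [|y [|z r]]]; [congruence| | |simpl; lia]; exfalso.
  - unfold thickness in Hthin. simpl in Hthin. lra.
  - assert (Hxy : x <> y) by (intros ->; inversion Hnd; simpl in *; tauto).
    inversion Hlen as [|? ? Hx Hlen']. inversion Hlen' as [|? ? Hy _].
    rewrite thickness_edge in Hthin; auto. simpl in Hthin. lra.
Qed.

Lemma thin_vertex m G s : simplex m s -> (2 <= length s)%nat ->
  thickness m s < G ^ sdim s ->
  exists q, In q s /\ altitude m q s < INR (sdim s) * G ^ sdim s * Lmax m s.
Proof.
  intros [Hne [Hnd Hlen]] H2 Hthin. rewrite Forall_forall in Hlen.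
  destruct s as [|x r]; [congruence|].
  destruct (other_vertex (x :: r) x Hnd H2 (or_introl eq_refl)) as [y [Hy Hyx]].
  assert (HL : 0 < Lmax m (x :: r)).
  { eapply Rlt_le_trans; [apply (dist_pos m y x); auto; apply Hlen; simpl; auto|].
    apply Lmax_ge; simpl; auto. }
  assert (Hn : (0 < sdim (x :: r))%nat) by (unfold sdim; lia).
  assert (Hden : 0 < INR (sdim (x :: r)) * Lmax m (x :: r))
    by (apply Rmult_lt_0_compat; auto; apply lt_0_INR; auto).
  unfold thickness in Hthin. destruct (Nat.eqb_spec (sdim (x :: r)) 0) as [E|_]; [lia|].
  destruct (proj1 (in_map_iff _ _ _) (Rminl_in (map (fun p => altitude m p (x :: r)) (x :: r))
              ltac:(discriminate))) as [q [Hq Hqin]].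
  rewrite <- Hq in Hthin. exists q. split; auto.
  apply (Rmult_lt_compat_r (INR (sdim (x :: r)) * Lmax m (x :: r))) in Hthin; auto.
  unfold Rdiv in Hthin. rewrite Rmult_assoc, Rinv_l, Rmult_1_r in Hthin by lra. lra.
Qed.

Lemma good_altitude m G s q : simplex m s -> good m G s -> (2 <= length s)%nat -> In q s ->
  G ^ sdim s * (INR (sdim s) * Lmax m s) <= altitude m q s.
Proof.
  intros [Hne [Hnd Hlen]] Hgood H2 Hq. rewrite Forall_forall in Hlen.
  specialize (Hgood s (conj Hne (conj Hnd (incl_refl s)))).
  destruct (other_vertex s q Hnd H2 Hq) as [y [Hy Hyq]].
  assert (HL : 0 < Lmax m s).
  { eapply Rlt_le_trans; [apply (dist_pos m y q); auto|]. apply Lmax_ge; auto. }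
  assert (Hden : 0 < INR (sdim s) * Lmax m s)
    by (apply Rmult_lt_0_compat; auto; apply lt_0_INR; unfold sdim; lia).
  unfold thickness in Hgood. destruct (Nat.eqb_spec (sdim s) 0) as [E|_]; [unfold sdim in E; lia|].
  apply Rge_le in Hgood.
  apply (Rmult_le_compat_r (INR (sdim s) * Lmax m s)) in Hgood; [|lra].
  unfold Rdiv in Hgood. rewrite Rmult_assoc, Rinv_l, Rmult_1_r in Hgood by lra.
  eapply Rle_trans; [exact Hgood|]. apply Rminl_le, in_map_iff. eauto.
Qed.

Lemma altitude_exchange m tau p q : NoDup tau -> (3 <= length tau)%nat ->
  In p tau -> In q tau -> p <> q ->
  altitude m p tau * altitude m q (drop_vertex p tau) <=
  altitude m q tau * altitude m p (drop_vertex q tau).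
Proof.
  intros Hnd H3 Hp Hq Hpq.
  destruct (third_vertex tau p q Hnd H3 Hp Hq Hpq) as [z [Hz [Hzp Hzq]]].
  set (T := drop_vertex p (drop_vertex q tau)).
  assert (Hqp : altitude m q (drop_vertex p tau) = dist_set m q (aff m T))
    by (unfold altitude, T, drop_vertex; rewrite remove_remove_comm; reflexivity).
  rewrite Hqp. apply hull_exchange.
  - assert (HzT : In z T) by (apply in_in_remove; auto; apply in_in_remove; auto).
    intros E. rewrite E in HzT. destruct HzT.
  - intros x Hx. apply in_remove in Hx. destruct Hx as [Hx Hxp].
    apply in_remove in Hx. apply in_in_remove; tauto.
  - apply in_in_remove; auto.
  - intros x Hx. destruct (pt_eq_dec x p) as [<-|Hxp]; [left; auto|right].
    apply in_in_remove; auto.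
  - apply in_in_remove; auto.
Qed.

Lemma facet_altitude_lower m G0 tau p q j : 0 < G0 -> simplex m tau -> flake m G0 tau ->
  sdim tau = S j -> (1 <= j)%nat -> In p tau -> In q tau -> p <> q ->
  G0 ^ j * (INR j * lmin m tau) <= altitude m q (drop_vertex p tau).
Proof.
  intros HG0 Hs [_ Hgood] Hdim Hj Hp Hq Hpq.
  destruct Hs as [Hne [Hnd Hlen]].
  set (facet := drop_vertex p tau).
  assert (Hqf : In q facet) by (apply in_in_remove; auto).
  assert (Hincl : incl facet tau) by (intros x Hx; apply in_remove in Hx; tauto).
  assert (Hlf : length facet = S j)
    by (unfold facet, drop_vertex, sdim in *; rewrite length_rem; auto; lia).
  assert (Hsf : simplex m facet).
  { split; [intros E; rewrite E in Hqf; destruct Hqf|split; [apply NoDup_rem; auto|]].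
    rewrite Forall_forall in *. auto. }
  assert (Hgf : good m G0 facet).
  { apply Hgood; [destruct Hsf as [? [? _]]; split; auto|]. unfold sdim in Hdim. lia. }
  assert (Hdf : sdim facet = j) by (unfold sdim; lia).
  pose proof (good_altitude m G0 facet q Hsf Hgf ltac:(lia) Hqf) as Halt. rewrite Hdf in Halt.
  destruct (third_vertex tau p q Hnd ltac:(unfold sdim in Hdim; lia) Hp Hq Hpq)
    as [z [Hz [Hzp Hzq]]].
  assert (Hl : lmin m tau <= Lmax m facet).
  { eapply Rle_trans; [apply (lmin_le m tau q z); auto|].
    apply Lmax_ge; auto. apply in_in_remove; auto. }
  eapply Rle_trans; [|exact Halt].
  apply Rmult_le_compat_l; [apply pow_le; lra|].
  apply Rmult_le_compat_l; [apply pos_INR|auto].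
Qed.

Lemma INR_le_pow2 j : INR (S j) <= 2 ^ j.
Proof.
  induction j as [|j IH]; [simpl; lra|].
  rewrite S_INR. simpl (2 ^ S j). pose proof (pow_R1_Rle 2 j ltac:(lra)). lra.
Qed.

Lemma lt_div_of_mult a b l : 0 < l -> a * l < b -> a < b / l.
Proof.
  intros Hl H. apply (Rmult_lt_reg_r l); auto. unfold Rdiv.
  rewrite Rmult_assoc, Rinv_l, Rmult_1_r by lra. auto.
Qed.

(* The bound at the vertex [q] of small altitude [D < (j+1) G0^(j+1) L]:
   for G0 > 1/2 it follows from [D <= L]; otherwise [(j+1) G0^j <= (2 G0)^j <= 1]. *)
Lemma thin_vertex_bound G0 L l D j : 0 < G0 <= 1 -> 0 < l <= L -> 0 <= D <= L ->
  D < INR (S j) * G0 ^ S j * L -> D * l < 2 * L ^ 2 * G0.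
Proof.
  intros HG0 Hl HD Hthin.
  destruct (Rle_dec G0 (1/2)) as [Hg|Hg].
  - assert (Hpow : INR (S j) * G0 ^ j <= 1).
    { apply Rle_trans with (2 ^ j * G0 ^ j).
      - apply Rmult_le_compat_r; [apply pow_le; lra|apply INR_le_pow2].
      - rewrite <- Rpow_mult_distr. rewrite <- (pow1 j). apply pow_incr. lra. }
    assert (HD' : D < G0 * L).
    { replace (INR (S j) * G0 ^ S j * L) with ((INR (S j) * G0 ^ j) * (G0 * L)) in Hthin
        by (simpl; ring).
      assert (0 < G0 * L) by nra. nra. }
    assert (D * l < G0 * L * l) by (apply Rmult_lt_compat_r; lra).
    assert (G0 * L * l <= G0 * L * L) by (apply Rmult_le_compat_l; nra).
    simpl. nra.
  - assert (D * l <= L * L)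
      by (apply Rle_trans with (L * l); [apply Rmult_le_compat_r|apply Rmult_le_compat_l]; lra).
    assert (0 < L * L) by nra.
    simpl. nra.
Qed.

(* The bound at any other vertex, from the exchange inequality [D a <= d b], the goodness
   bound [a >= G0^j j l] of the facet and [b <= L], using [(j+1)/j <= 2]. *)
Lemma other_vertex_bound G0 L l D d a b j : 0 < G0 -> (1 <= j)%nat -> 0 < l <= L ->
  0 <= D -> 0 <= d -> D * a <= d * b -> G0 ^ j * (INR j * l) <= a -> b <= L ->
  d < INR (S j) * G0 ^ S j * L -> D * l < 2 * L ^ 2 * G0.
Proof.
  intros HG0 Hj Hl HD Hd Hex Ha Hb Hthin.
  assert (HJ : 1 <= INR j) by (apply (le_INR 1); auto).
  assert (HGj : 0 < G0 ^ j) by (apply pow_lt; lra).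
  assert (Hchain : G0 ^ j * (INR j * (D * l)) < G0 ^ j * (INR (S j) * G0 * L * L)).
  { apply Rle_lt_trans with (d * L).
    - apply Rle_trans with (D * a);
        [|apply Rle_trans with (d * b); [auto|apply Rmult_le_compat_l; auto]].
      replace (G0 ^ j * (INR j * (D * l))) with (D * (G0 ^ j * (INR j * l))) by ring.
      apply Rmult_le_compat_l; auto.
    - replace (G0 ^ j * (INR (S j) * G0 * L * L)) with (INR (S j) * G0 ^ S j * L * L)
        by (simpl; ring).
      apply Rmult_lt_compat_r; lra. }
  apply Rmult_lt_reg_l in Hchain; [|auto]. rewrite S_INR in Hchain.
  assert (0 <= (INR j - 1) * (G0 * L * L)) by (apply Rmult_le_pos; [lra|]; nra).
  apply (Rmult_lt_reg_l (INR j)); [lra|]. simpl. nra.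
Qed.

Lemma vertex_bounds m tau p : simplex m tau -> (2 <= length tau)%nat -> In p tau ->
  0 < lmin m tau <= Lmax m tau /\ 0 <= altitude m p tau <= Lmax m tau.
Proof.
  intros [_ [Hnd Hlen]] H2 Hp.
  destruct (other_vertex tau p Hnd H2 Hp) as [v [Hv Hvp]].
  assert (Hlv : length v = m) by (rewrite Forall_forall in Hlen; auto).
  destruct (altitude_bounds m p tau v Hv Hvp Hlv) as [HD0 HDv].
  repeat split; auto.
  - apply (lmin_pos m tau v p); auto.
  - eapply Rle_trans; [apply (lmin_le m tau v p); auto|apply Lmax_ge; auto].
  - eapply Rle_trans; [exact HDv|]. apply Lmax_ge; auto.
Qed.

Theorem mainTheorem5 (m : nat) (G0 : R) (tau : list point)
  (hG0 : 0 < G0 <= 1)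
  (hsimp : simplex m tau)
  (hflake : flake m G0 tau) :
  forall p, In p tau ->
    altitude m p tau < 2 * (Lmax m tau) ^ 2 * G0 / lmin m tau.
Proof.
  intros p Hp.
  pose proof (flake_three_vertices m G0 tau hG0 hsimp hflake) as H3.
  destruct (sdim tau) as [|j] eqn:Hdim; [unfold sdim in Hdim; lia|].
  assert (Hj : (1 <= j)%nat) by (unfold sdim in Hdim; lia).
  destruct (thin_vertex m G0 tau hsimp ltac:(lia) (flake_thin m G0 tau hsimp hflake))
    as [q [Hq Hthin]].
  rewrite Hdim in Hthin.
  destruct (vertex_bounds m tau p hsimp ltac:(lia) Hp) as [Hl HD].
  pose proof hsimp as [_ [Hnd Hlen]]. rewrite Forall_forall in Hlen.
  apply lt_div_of_mult; [lra|].
  destruct (pt_eq_dec p q) as [<-|Hpq].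
  - apply (thin_vertex_bound G0 _ _ _ j); auto.
  - destruct (third_vertex tau p q Hnd ltac:(lia) Hp Hq Hpq) as [z [Hz [Hzp Hzq]]].
    apply (other_vertex_bound G0 _ _ _ (altitude m q tau) (altitude m q (drop_vertex p tau))
             (altitude m p (drop_vertex q tau)) j); auto; try lra.
    + apply (altitude_bounds m q tau p); auto.
    + apply altitude_exchange; auto.
    + apply (facet_altitude_lower m G0 tau p q j); auto; lra.
    + eapply Rle_trans; [apply (altitude_bounds m p _ z); auto; apply in_in_remove; auto|].
      apply Lmax_ge; auto.
Qed.
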